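(* Let $\beta,\delta,K,\mu>0$ and set $s^*=\mu/\delta$. Define $$a=2\beta,\qquad b=3\beta s^*-K\beta,\qquad c=2\beta s^{*2}+2K\delta-2K\beta s^*,\qquad d=4K\delta s^*,$$ and $$\Delta=b^2c^2-4ac^3-4b^3d-27a^2d^2+18abcd.$$ If $\Delta<0$, then the cubic equation $am^3+bm^2+cm+d=0$ has no positive root $m$.
   Context: This cubic determines the male component $m^*$ of a possible interior equilibrium, with female component $f^*>0$, of the system $$f'=\tfrac12 fm\beta L-\delta f,\qquad m'=\big(\tfrac12 fm+fs\big)\beta L-\delta m,\qquad s'=\mu-\delta s,\qquad L=1-\frac{f+m+s}{K}.$$ *)

From Stdlib Require Import Reals.
Open Scope R_scope.

Definition cubic_disc (a b c d : R) : R :=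
  b^2 * c^2 - 4 * a * c^3 - 4 * b^3 * d - 27 * a^2 * d^2 + 18 * a * b * c * d.

(** A positive root [m] splits the cubic as [(x - m)(a x^2 + e x + g)] with
    [d = -m g].  When [a] and [d] have the same sign, [a g < 0], so the
    quadratic factor has positive discriminant; the discriminant of the cubic
    is that of the quadratic times the square of its value at [m], hence it is
    nonnegative.  Here [a = 2 beta > 0] and [d = 4 K mu > 0]. *)

From Stdlib Require Import Reals Lra Psatz.
Open Scope R_scope.

Lemma cubic_disc_linear_factor (a e g m : R) :
  cubic_disc a (e - a * m) (g - e * m) (- (m * g)) =
  (a * m^2 + e * m + g)^2 * (e^2 - 4 * a * g).
Proof. unfold cubic_disc; ring. Qed.

Lemma cubic_disc_ge0_of_pos_root (a b c d m : R) :
  0 < a * d -> 0 < m -> a * m^3 + b * m^2 + c * m + d = 0 ->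
  0 <= cubic_disc a b c d.
Proof.
  intros had hm hroot.
  set (e := b + a * m); set (g := c + e * m).
  assert (hd : d = - (m * g)) by (unfold g, e; nra).
  assert (hag : a * g < 0) by (rewrite hd in had; nra).
  replace b with (e - a * m) by (unfold e; ring).
  replace c with (g - e * m) by (unfold g; ring).
  rewrite hd, cubic_disc_linear_factor.
  apply Rmult_le_pos; [apply pow2_ge_0 | nra].
Qed.

Theorem mainTheorem18 (beta delta K mu : R) :
  0 < beta -> 0 < delta -> 0 < K -> 0 < mu ->
  let s := mu / delta in
  let a := 2 * beta in
  let b := 3 * beta * s - K * beta in
  let c := 2 * beta * s^2 + 2 * K * delta - 2 * K * beta * s in
  let d := 4 * K * delta * s in
  cubic_disc a b c d < 0 ->
  forall m : R, 0 < m -> a * m^3 + b * m^2 + c * m + d <> 0.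
Proof.
  intros hbeta hdelta hK hmu s a b c d hdisc m hm hroot.
  assert (hs : 0 < s) by (unfold s; apply Rdiv_lt_0_compat; lra).
  assert (had : 0 < a * d).
  { unfold a, d; apply Rmult_lt_0_compat; [lra|].
    apply Rmult_lt_0_compat; [nra | exact hs]. }
  pose proof (cubic_disc_ge0_of_pos_root a b c d m had hm hroot).
  lra.
Qed.
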